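(* Fix $n\in\mathbb{N}$, points $x_1,\dots,x_n$, $\varepsilon_n>0$, a continuous function $V:\mathbb{R}\to[0,\infty)$ and weights $W_{ij}\geq0$ ($i,j=1,\dots,n$). For $p\geq1$ and $u:\{x_1,\dots,x_n\}\to\mathbb{R}$ define \[ \tilde{\mathcal{G}}_n^{(p)}(u)=\Big[\frac{1}{\varepsilon_nn^2}\sum_{i,j=1}^nW_{ij}^p|u(x_i)-u(x_j)|^p+\frac{1}{\varepsilon_n^pn}\sum_{i=1}^nV^p(u(x_i))\Big]^{1/p}, \] \[ \mathcal{G}_n^{(\infty)}(u)=\max\Big\{\max_{i,j}W_{ij}|u(x_i)-u(x_j)|,\ \frac{1}{\varepsilon_n}\max_iV(u(x_i))\Big\}. \] Then $\tilde{\mathcal{G}}_n^{(p)}$ $\Gamma$-converges to $\mathcal{G}_n^{(\infty)}$ as $p\to\infty$, with respect to pointwise convergence of functions on $\{x_1,\dots,x_n\}$ (i.e. convergence in $\mathbb{R}^n$).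
   Context: $\Gamma$-convergence as $p\to\infty$: for every $u$ and every family $u_p\to u$, $\mathcal{G}_n^{(\infty)}(u)\leq\liminf_{p\to\infty}\tilde{\mathcal{G}}_n^{(p)}(u_p)$, and for every $u$ there exists $u_p\to u$ with $\limsup_{p\to\infty}\tilde{\mathcal{G}}_n^{(p)}(u_p)\leq\mathcal{G}_n^{(\infty)}(u)$. *)

From HB Require Import structures.
From mathcomp Require Import all_boot all_order all_algebra.
From mathcomp Require Import all_classical all_reals all_analysis.
Set Implicit Arguments. Unset Strict Implicit. Unset Printing Implicit Defensive.
Import Order.TTheory GRing.Theory Num.Theory.
Local Open Scope ring_scope.

(* A function u on the vertex set {x_1,...,x_n} is represented by its vector of
   values u : 'I_n -> R, u i = u(x_i). *)

Definition Gp (R : realType) (n : nat) (eps : R) (V : R -> R)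
  (W : 'I_n -> 'I_n -> R) (p : R) (u : 'I_n -> R) : R :=
  ((eps * (n%:R ^+ 2))^-1 *
     (\sum_(i < n) \sum_(j < n) (W i j `^ p) * (`|u i - u j| `^ p))
   + ((eps `^ p) * n%:R)^-1 * (\sum_(i < n) (V (u i)) `^ p)) `^ (p^-1).

(* G_n^(infty)(u); all quantities are nonnegative, so 0 is a neutral element
   for the maxima (for n >= 1). *)
Definition Ginf (R : realType) (n : nat) (eps : R) (V : R -> R)
  (W : 'I_n -> 'I_n -> R) (u : 'I_n -> R) : R :=
  Num.max (\big[Num.max/0]_(i < n) \big[Num.max/0]_(j < n) (W i j * `|u i - u j|))
          (eps^-1 * \big[Num.max/0]_(i < n) V (u i)).

From HB Require Import structures.
From mathcomp Require Import all_boot all_order all_algebra.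
From mathcomp Require Import all_classical all_reals all_analysis.
Import Order.TTheory GRing.Theory Num.Theory.
Import numFieldNormedType.Exports.
Local Open Scope classical_set_scope.
Local Open Scope ring_scope.

(* Each term of G^(oo)(u) is bounded by G^(p)(u) up to a factor c^(1/p), with
   c = 1/(eps n^2) for the edge terms and c = 1/n for the vertex terms; since
   c^(1/p) -> 1, continuity of V along a converging family gives the liminf
   inequality.  Conversely every summand of G^(p)(u)^p, once normalised, is at
   most G^(oo)(u)^p, so G^(p)(u) <= (1/eps + 1)^(1/p) G^(oo)(u) and the
   constant family is a recovery sequence. *)

Section powR_facts.
Variable R : realType.
Implicit Types (c x p r S : R).

Lemma near_pinfty_gt0 : \forall p \near +oo, 0 < p :> R.
Proof. by apply: nbhs_pinfty_gt; rewrite num_real. Qed.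

Lemma powRV x r : x^-1 `^ r = (x `^ r)^-1.
Proof.
have [x_lt0 | x_gt0 | ->] := ltgtP x 0.
- by rewrite !lt0_powR1 ?invr1 ?invr_lt0.
- by rewrite /powR gt_eqF ?invr_gt0// gt_eqF// lnV// mulrN expRN.
- by rewrite invr0 /powR eqxx; case: (r == 0); rewrite ?invr1 ?invr0.
Qed.

Lemma mulr_powRV c x p : 0 < p -> 0 <= c -> 0 <= x ->
  c `^ p^-1 * x = (c * x `^ p) `^ p^-1.
Proof.
move=> p_gt0 c_ge0 x_ge0.
by rewrite powRM ?powR_ge0// -powRrM mulfV ?gt_eqF// powRr1.
Qed.

Lemma ler_mul_powRV c x p S : 0 < p -> 0 <= c -> 0 <= x ->
  c * x `^ p <= S -> c `^ p^-1 * x <= S `^ p^-1.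
Proof.
move=> p_gt0 c_ge0 x_ge0 le_S; rewrite mulr_powRV//.
have cx_ge0 : 0 <= c * x `^ p by rewrite mulr_ge0 ?powR_ge0.
by apply: ge0_ler_powR; rewrite ?nnegrE ?invr_ge0 ?(ltW p_gt0) ?(le_trans cx_ge0).
Qed.

Lemma ler_powRV_mul c x p S : 0 < p -> 0 <= c -> 0 <= x -> 0 <= S ->
  S <= c * x `^ p -> S `^ p^-1 <= c `^ p^-1 * x.
Proof.
move=> p_gt0 c_ge0 x_ge0 S_ge0 S_le; rewrite mulr_powRV//.
by apply: ge0_ler_powR; rewrite ?nnegrE ?invr_ge0 ?(ltW p_gt0) ?(le_trans S_ge0).
Qed.

Lemma cvg_powR_invr c : 0 < c -> (fun p => c `^ p^-1) @ +oo --> (1 : R).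
Proof.
move=> c_gt0.
have invr_cvg0 : (fun p : R => p^-1) @ +oo --> 0.
  by apply/gtr0_cvgV0; [exact: near_pinfty_gt0 | exact: cvg_id].
have -> : (fun p => c `^ p^-1) = (fun p => expR (p^-1 * ln c)).
  by apply/funext => p; rewrite /powR gt_eqF.
have exponent_cvg0 : (fun p : R => p^-1 * ln c) @ +oo --> 0.
  by rewrite -(mul0r (ln c)); apply: cvgMl.
by rewrite -expR0; apply: (cvg_comp _ _ exponent_cvg0 (@continuous_expR R 0)).
Qed.

End powR_facts.

Section limf_einf_esup_cvg.
Context {U : choiceType} {T : filteredType U} {R : realType}.
Context {F : set_system T} {FF : Filter F}.
Local Open Scope ereal_scope.

Lemma limf_einf_ge_cvg (f g : T -> R) (l : R) : g @ F --> l ->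
  (\forall x \near F, (g x <= f x)%R) -> l%:E <= limf_einf (fun x => (f x)%:E) F.
Proof.
move=> gl gf; rewrite limf_einfE; apply/lee_subgt0Pr => e e_gt0.
pose A := [set x | (l - e < g x)%R /\ (g x <= f x)%R].
have FA : F A.
  near=> x; split; last by near: x.
  by near: x; apply: (cvgr_gt l gl); rewrite ltrBlDr ltrDl.
apply: le_ereal_sup_tmp; exists (ereal_inf ((fun x => (f x)%:E) @` A)); first by exists A.
apply: le_ereal_inf_tmp => _ [x [lg gf'] <-].
by rewrite -EFinB lee_fin ltW// (lt_le_trans lg).
Unshelve. all: by end_near. Qed.

Lemma limf_esup_le_cvg (f g : T -> R) (l : R) : g @ F --> l ->
  (\forall x \near F, (f x <= g x)%R) -> limf_esup (fun x => (f x)%:E) F <= l%:E.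
Proof.
move=> gl fg; rewrite -leeN2 -limf_einfN.
have -> : \- (fun x => (f x)%:E) = (fun x => (- f x)%:E) by apply/funext.
rewrite -EFinN; apply: (limf_einf_ge_cvg _ (fun x => - g x)%R); first exact: cvgN.
by apply: filterS fg => x; rewrite lerN2.
Qed.

End limf_einf_esup_cvg.

Lemma invrMK_le {R : realFieldType} (a k x : R) : 0 <= a -> 0 <= x ->
  (a * k)^-1 * (k * x) <= a^-1 * x.
Proof.
move=> a_ge0 x_ge0; have [-> | k_neq0] := eqVneq k 0.
  by rewrite mulr0 invr0 mul0r mulr_ge0// invr_ge0.
by rewrite invfM -mulrA mulKf.
Qed.

Lemma ler_sum_term {R : numDomainType} {I : finType} (F : I -> R) (i : I) :
  (forall k, 0 <= F k) -> F i <= \sum_k F k.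
Proof. by move=> F_ge0; rewrite (bigD1 i)//= lerDl sumr_ge0. Qed.

Section Gamma_limit.
Variables (R : realType) (n : nat) (eps : R) (V : R -> R) (W : 'I_n -> 'I_n -> R).
Hypotheses (eps_gt0 : 0 < eps) (V_ge0 : forall t, 0 <= V t)
  (W_ge0 : forall i j, 0 <= W i j).

Local Notation Gp := (Gp eps V W).
Local Notation Ginf := (Ginf eps V W).

Let eps_ge0 : 0 <= eps. Proof. exact: ltW. Qed.
Let epsV_ge0 : 0 <= eps^-1. Proof. by rewrite invr_ge0. Qed.
Let edge_coef_ge0 : 0 <= (eps * n%:R ^+ 2)^-1.
Proof. by rewrite invr_ge0 mulr_ge0. Qed.

Lemma Ginf_ge0 u : 0 <= Ginf u.
Proof. by rewrite le_max bigmax_ge_id. Qed.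

Lemma Ginf_ge_edge u i j : W i j * `|u i - u j| <= Ginf u.
Proof.
rewrite le_max; apply/orP; left.
exact: le_trans (le_bigmax _ _ j) (le_bigmax _ _ i).
Qed.

Lemma Ginf_ge_vertex u i : eps^-1 * V (u i) <= Ginf u.
Proof. by rewrite le_max ler_wpM2l ?le_bigmax ?orbT. Qed.

Lemma Ginf_le u r : 0 <= r -> (forall i j, W i j * `|u i - u j| <= r) ->
  (forall i, eps^-1 * V (u i) <= r) -> Ginf u <= r.
Proof.
move=> r_ge0 edge_le vertex_le; rewrite ge_max; apply/andP; split.
  by apply: bigmax_le => // i _; apply: bigmax_le.
rewrite -ler_pdivlMl ?invr_gt0// invrK.
apply: bigmax_le => [|i _]; first by rewrite mulr_ge0// ltW.
by rewrite -ler_pdivrMl.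
Qed.

Let edge_energy (p : R) (u : 'I_n -> R) :=
  (eps * n%:R ^+ 2)^-1 * \sum_(i < n) \sum_(j < n) W i j `^ p * `|u i - u j| `^ p.
Let vertex_energy (p : R) (u : 'I_n -> R) :=
  (eps `^ p * n%:R)^-1 * \sum_(i < n) V (u i) `^ p.

Let GpE p u : Gp p u = (edge_energy p u + vertex_energy p u) `^ p^-1.
Proof. by []. Qed.

Let edge_energy_ge0 p u : 0 <= edge_energy p u.
Proof.
apply: mulr_ge0 => //.
by do 2!(apply: sumr_ge0 => ? _); rewrite mulr_ge0 ?powR_ge0.
Qed.

Let vertex_energy_ge0 p u : 0 <= vertex_energy p u.
Proof.
apply: mulr_ge0; first by rewrite invr_ge0 mulr_ge0 ?powR_ge0.
by apply: sumr_ge0 => *; exact: powR_ge0.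
Qed.

Lemma Gp_ge_edge p u i j : 0 < p ->
  (eps * n%:R ^+ 2)^-1 `^ p^-1 * (W i j * `|u i - u j|) <= Gp p u.
Proof.
move=> p_gt0; rewrite GpE; apply: ler_mul_powRV; rewrite ?mulr_ge0//.
apply: ler_wpDr => //; apply: ler_wpM2l => //.
have term_ge0 k l : 0 <= W k l `^ p * `|u k - u l| `^ p by rewrite mulr_ge0 ?powR_ge0.
rewrite powRM//; apply: le_trans _ (ler_sum_term _ i _).
  exact: (ler_sum_term (fun l => W i l `^ p * `|u i - u l| `^ p)).
by move=> k; exact: sumr_ge0.
Qed.

Lemma Gp_ge_vertex p u i : 0 < p ->
  n%:R^-1 `^ p^-1 * (eps^-1 * V (u i)) <= Gp p u.
Proof.
move=> p_gt0; rewrite GpE; apply: ler_mul_powRV; rewrite ?invr_ge0 ?mulr_ge0//.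
apply: ler_wpDl => //; rewrite powRM// powRV mulrA -invfM [n%:R * _]mulrC.
apply: ler_wpM2l; first by rewrite invr_ge0 mulr_ge0 ?powR_ge0.
by apply: (ler_sum_term (fun k => V (u k) `^ p)) => k; exact: powR_ge0.
Qed.

Lemma Gp_le_Ginf p u : 0 < p -> Gp p u <= (eps^-1 + 1) `^ p^-1 * Ginf u.
Proof.
move=> p_gt0; set M := Ginf u; have M_ge0 : 0 <= M := Ginf_ge0 u.
rewrite GpE; apply: ler_powRV_mul; rewrite ?addr_ge0//.
rewrite mulrDl mul1r; apply: lerD.
- have edge_le k l : W k l `^ p * `|u k - u l| `^ p <= M `^ p.
    rewrite -powRM//; apply: ge0_ler_powR; rewrite ?nnegrE ?invr_ge0 ?(ltW p_gt0)//.
      exact: mulr_ge0.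
    exact: Ginf_ge_edge.
  have sum_le : \sum_(k < n) \sum_(l < n) W k l `^ p * `|u k - u l| `^ p
                  <= n%:R ^+ 2 * M `^ p.
    apply: le_trans (ler_sum _ (fun k _ => ler_sum _ (fun l _ => edge_le k l))) _.
    by rewrite !sumr_const !card_ord -mulrnA -natrX mulr_natl.
  rewrite /edge_energy.
  apply: le_trans _ (invrMK_le _ (n%:R ^+ 2) _ eps_ge0 (powR_ge0 M p)).
  by rewrite ler_wpM2l.
- have vertex_le k : V (u k) `^ p <= (eps * M) `^ p.
    apply: ge0_ler_powR; rewrite ?nnegrE ?invr_ge0 ?(ltW p_gt0) ?mulr_ge0//.
    by rewrite -ler_pdivrMl// Ginf_ge_vertex.
  have sum_le : \sum_(k < n) V (u k) `^ p <= n%:R * (eps * M) `^ p.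
    apply: le_trans (ler_sum _ (fun k _ => vertex_le k)) _.
    by rewrite sumr_const card_ord mulr_natl.
  have epsp_gt0 : 0 < eps `^ p by rewrite powR_gt0.
  have -> : M `^ p = (eps `^ p)^-1 * (eps * M) `^ p.
    by rewrite powRM ?mulKf ?gt_eqF// ltW.
  rewrite /vertex_energy.
  apply: le_trans _ (invrMK_le _ n%:R _ (ltW epsp_gt0) (powR_ge0 _ p)).
  by rewrite ler_wpM2l// invr_ge0 mulr_ge0// ltW.
Qed.

Lemma Ginf_le_liminf_Gp u (up : R -> 'I_n -> R) : continuous V ->
  (forall i, (fun p => up p i) @ +oo --> u i) ->
  ((Ginf u)%:E <= limf_einf (fun p => (Gp p (up p))%:E) (pinfty_nbhs R))%E.
Proof.
move=> V_cont up_cvg.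
have n_gt0 (i : 'I_n) : 0 < n%:R :> R by rewrite ltr0n (leq_ltn_trans _ (ltn_ord i)).
set L := limf_einf _ _.
have L_ge0 : ((0 : R)%:E <= L)%E.
  apply: (limf_einf_ge_cvg _ (fun=> 0)); first exact: cvg_cst.
  by apply: nearW => p; exact: powR_ge0.
have L_ge_edge i j : ((W i j * `|u i - u j|)%:E <= L)%E.
  rewrite -[W i j * _]mul1r.
  apply: (limf_einf_ge_cvg (fun p => Gp p (up p)) (fun p : R =>
    (eps * n%:R ^+ 2)^-1 `^ p^-1 * (W i j * `|up p i - up p j|))).
    apply: cvgM; last by apply: cvgMr; apply: cvg_norm; apply: cvgB.
    by apply: cvg_powR_invr; rewrite invr_gt0 mulr_gt0// exprn_gt0 ?(n_gt0 i).
  by near do apply: Gp_ge_edge; exact: near_pinfty_gt0.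
have L_ge_vertex i : ((eps^-1 * V (u i))%:E <= L)%E.
  rewrite -[eps^-1 * _]mul1r.
  apply: (limf_einf_ge_cvg (fun p => Gp p (up p))
    (fun p : R => n%:R^-1 `^ p^-1 * (eps^-1 * V (up p i)))).
    apply: cvgM; first by apply: cvg_powR_invr; rewrite invr_gt0 (n_gt0 i).
    exact: cvgMr (cvg_comp _ _ (up_cvg i) (V_cont (u i))).
  by near do apply: Gp_ge_vertex; exact: near_pinfty_gt0.
case: L L_ge0 L_ge_edge L_ge_vertex => [r | |]// r_ge0 r_ge_edge r_ge_vertex.
  by rewrite lee_fin Ginf_le// => [i j|i]; rewrite -lee_fin.
by rewrite leey.
Unshelve. all: by end_near. Qed.

Lemma limsup_Gp_le_Ginf u :
  (limf_esup (fun p => (Gp p u)%:E) (pinfty_nbhs R) <= (Ginf u)%:E)%E.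
Proof.
apply: (limf_esup_le_cvg (fun p => Gp p u) (fun p : R => (eps^-1 + 1) `^ p^-1 * Ginf u)).
  rewrite -[X in _ --> X]mul1r; apply: cvgMl.
  by apply: cvg_powR_invr; rewrite ltr_wpDl.
by near do apply: Gp_le_Ginf; exact: near_pinfty_gt0.
Unshelve. all: by end_near. Qed.

End Gamma_limit.

Theorem proposition1p4 (R : realType) (n : nat) (eps : R) (V : R -> R)
  (W : 'I_n -> 'I_n -> R) :
  0 < eps ->
  continuous V ->
  (forall t, 0 <= V t) ->
  (forall i j, 0 <= W i j) ->
  (* liminf inequality *)
  (forall (u : 'I_n -> R) (up : R -> 'I_n -> R),
     (forall i, (fun p => up p i) @ +oo --> u i) ->
     ((Ginf eps V W u)%:E <=
        limf_einf (fun p => (Gp eps V W p (up p))%:E) (pinfty_nbhs R))%E) /\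
  (* recovery sequence *)
  (forall (u : 'I_n -> R), exists up : R -> 'I_n -> R,
     (forall i, (fun p => up p i) @ +oo --> u i) /\
     (limf_esup (fun p => (Gp eps V W p (up p))%:E) (pinfty_nbhs R) <=
        (Ginf eps V W u)%:E)%E).
Proof.
move=> eps_gt0 V_cont V_ge0 W_ge0; split=> [u up up_cvg | u].
  exact: Ginf_le_liminf_Gp.
exists (fun=> u); split=> [i|]; first exact: cvg_cst.
exact: limsup_Gp_le_Ginf.
Qed.
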